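(* For all $i,j\in\mathbb{Z}$ with $i\neq j$, the linear orders $L_i$ and $L_j$ are not isomorphic. Moreover, each $L_i$ is scattered (contains no dense suborder).
   Context: Ordinal exponents have their usual ordinal meaning: $\omega^n$ is the ordinal $\omega^n$ for $n\in\omega$, and $\omega^\omega=\sup_{n<\omega}\omega^n$. For a positive integer $k$ and an order $Z$, $kZ$ denotes $k$ consecutive copies of $Z$. Given orders $M_k$ ($k\ge 1$), the sum $\cdots+M_3+M_2+M_1$ denotes the $\omega^*$-indexed ordered sum, in which $M_{k+1}$ lies entirely to the left of $M_k$. For $n\ge 0$ define \[ L_n=\cdots+3\omega^{n+3}+2\omega^{n+2}+\omega^{n+1}+\omega^\omega, \] i.e. the $\omega^*$-sum whose $k$-th summand from the right ($k\ge1$) is $k\,\omega^{n+k}$, followed on the far right by $\omega^\omega$. For $n\ge1$ define \[ L_{-n}=\cdots+(n+3)\omega^{3}+(n+2)\omega^{2}+(n+1)\omega+\omega^\omega, \] i.e. the $\omega^*$-sum whose $k$-th summand from the right ($k\ge1$) is $(n+k)\,\omega^{k}$, followed on the far right by $\omega^\omega$. An order is dense if it is infinite and between any two points there is a third; an order is scattered if it contains no dense suborder. *)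

From mathcomp Require Import all_boot all_order all_algebra.
From Stdlib Require List.
Set Implicit Arguments. Unset Strict Implicit. Unset Printing Implicit Defensive.

Record ord := Ord { car :> Type; olt : car -> car -> Prop }.

Fixpoint lexlt (s t : seq nat) : Prop :=
  match s, t with
  | a :: s', b :: t' => (a < b)%N \/ (a = b /\ lexlt s' t')
  | _, _ => False
  end.

Definition omega_pow (n : nat) : ord :=
  @Ord (n.-tuple nat) (fun x y => lexlt (val x) (val y)).

(* omega^omega : ordinals < omega^omega in Cantor normal form: s = [c_0; c_1; ...; c_d]
   stands for c_d w^d + ... + c_0, normalised by last coefficient nonzero (s = [::] is 0). *)
Definition CNF := {s : seq nat | last 1%N s != 0%N}.
Definition omega_omega : ord :=
  @Ord CNF (fun x y => (size (val x) < size (val y))%N \/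
                       (size (val x) = size (val y) /\ lexlt (rev (val x)) (rev (val y)))).

Definition kcopies (k : nat) (Z : ord) : ord :=
  @Ord ('I_k * Z)%type (fun a b => (a.1 < b.1)%N \/ (a.1 = b.1 /\ olt a.2 b.2)).

Definition osum (A B : ord) : ord :=
  @Ord (A + B)%type (fun a b => match a, b with
                                | inl x, inl y => olt x y
                                | inl _, inr _ => True
                                | inr _, inl _ => False
                                | inr x, inr y => olt x y
                                end).

(* ... + M 2 + M 1 + M 0 : omega^*-indexed sum; M (k+1) lies entirely left of M k.
   (M k here is the (k+1)-th summand from the right.) *)
Definition ostar_sum (M : nat -> ord) : ord :=
  @Ord {k : nat & M k}
    (fun a b => (projT1 b < projT1 a)%N \/
       exists k (x y : M k), a = existT _ k x /\ b = existT _ k y /\ olt x y).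

(* L_n (n >= 0): k-th summand from the right (k >= 1) is k omega^(n+k). *)
Definition L_nonneg (n : nat) : ord :=
  osum (ostar_sum (fun k => kcopies k.+1 (omega_pow (n + k.+1)))) omega_omega.

(* L_{-n} (n >= 1): k-th summand from the right (k >= 1) is (n+k) omega^k. *)
Definition L_neg (n : nat) : ord :=
  osum (ostar_sum (fun k => kcopies (n + k.+1) (omega_pow k.+1))) omega_omega.

Definition L (i : int) : ord :=
  match i with
  | Posz n => L_nonneg n
  | Negz m => L_neg m.+1   (* Negz m = -(m+1) *)
  end.

Definition isomorphic (A B : ord) : Prop :=
  exists f : A -> B, bijective f /\ forall x y, olt x y <-> olt (f x) (f y).

Definition infinite_sub (A : ord) (D : A -> Prop) : Prop :=
  ~ exists l : list A, forall x, D x -> List.In x l.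

Definition dense_sub (A : ord) (D : A -> Prop) : Prop :=
  infinite_sub D /\
  forall x y, D x -> D y -> olt x y -> exists z, D z /\ olt x z /\ olt z y.

Definition scattered (A : ord) : Prop := ~ exists D : A -> Prop, dense_sub D.

From mathcomp Require Import all_boot all_order all_algebra.
From mathcomp Require Import zify.
From Stdlib Require Import Eqdep_dec FinFun Classical.
Set Implicit Arguments. Unset Strict Implicit. Unset Printing Implicit Defensive.

(* Each [L i] is a sum [Lsum c d] of blocks with [c k = b + k + 1] and [d - b = i].  Call a
   point of limit rank [e] if it is an [e]-fold left limit; order isomorphisms preserve limit
   ranks.  Take [x] at or before the start of [omega^omega].  For large [k], the start of block
   [k+1] is the last point of rank [d + k + 3] before [x], and between it and [x] lie exactly
   [c (k+1)] points of rank [d + k + 2]: the starts of the other copies of block [k+1] and the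
   start of block [k].  Hence isomorphic sums satisfy [c (e + d') = c' (e + d)] for large [e],
   i.e. [b + d' = b' + d], which forces [i = j].  Scatteredness: above any point only finitely
   many blocks and [omega^omega] remain, which is well-founded, whereas density gives an
   infinite descending chain between two points of a dense suborder. *)

(** * Lexicographic order and trailing zeros *)

Lemma lexlt_irr s : ~ lexlt s s.
Proof. by elim: s => [|a s IH] //=; case=> [|[_ /IH]]; rewrite ?ltnn. Qed.

Lemma lexlt_trans s t u : lexlt s t -> lexlt t u -> lexlt s u.
Proof.
elim: s t u => [|a s IH] [|b t] [|c u] //=.
case=> [ab|[<- st]] [bc|[<- tu]]; first by left; apply: ltn_trans ab bc.
- by left.
- by left.
- by right; split=> //; apply: IH st tu.
Qed.

Lemma lexlt_total s t : size s = size t -> [\/ lexlt s t, s = t | lexlt t s].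
Proof.
elim: s t => [|a s IH] [|b t] //= => [_|[/IH st]]; first by constructor 2.
case: (ltngtP a b) => [ab|ba|<-]; first by constructor 1; left.
  by constructor 3; left.
by case: st => [st|->|ts]; [constructor 1; right | constructor 2 | constructor 3; right].
Qed.

Lemma lexlt_cat p p' s s' : size p = size p' ->
  lexlt (p ++ s) (p' ++ s') <-> lexlt p p' \/ (p = p' /\ lexlt s s').
Proof.
elim: p p' => [|a p IH] [|b p'] //= => [_|[/IH ->]].
  by split=> [|[|[]]] //; right.
split.
- case=> [ab|[-> [pp|[-> ss]]]]; [by left; left | by left; right | by right].
- case=> [[ab|[-> pp]]|[[-> ->] ss]]; [by left | by right; split=> //; left |].
  by right; split=> //; right.
Qed.

Lemma not_lexlt_nseq0 n s : size s = n -> ~ lexlt s (nseq n 0).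
Proof. by move=> <-; elim: s => [|a s IH] //= [|[_ /IH]]. Qed.

Lemma Acc_lexlt n s : size s = n -> Acc (fun a b => size a = size b /\ lexlt a b) s.
Proof.
elim: n s => [|n IHn] [|h s] sn; try discriminate.
  by constructor=> y [] _; case: y => [|? ?] [].
case: sn => sn; elim/ltn_ind: h s sn => h IHh s sn.
have acc_s := IHn s sn; elim: acc_s sn => {}s _ IHs sn.
constructor=> -[|a u] [] /=; first by [].
case=> su [ah|[-> us]].
- by apply: IHh; rewrite ?su.
- by apply: IHs; rewrite ?su.
Qed.

Definition trailing_zeros (s : seq nat) := find (fun a => a != 0) (rev s).

Lemma trailing_zeros_nseq0 n : trailing_zeros (nseq n 0) = n.
Proof. by rewrite /trailing_zeros rev_nseq hasNfind ?size_nseq //; elim: n. Qed.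

Lemma trailing_zeros_cat p v a : trailing_zeros (p ++ v.+1 :: nseq a 0) = a.
Proof.
rewrite /trailing_zeros rev_cat rev_cons rev_nseq -cats1 -catA find_cat.
have -> : has (fun a => a != 0) (nseq a 0) = false by elim: a.
by rewrite size_nseq /= addn0.
Qed.

Lemma nseq0_or_last_nonzero s :
  s = nseq (size s) 0 \/ exists p v a, s = p ++ v.+1 :: nseq a 0.
Proof.
elim/last_ind: s => [|s [|v] IH]; [by left | | by right; exists s, v, 0; rewrite cats1].
case: IH => [E|[p [v [a ->]]]].
  by left; rewrite size_rcons {1}E; elim: (size s) => //= n <-.
right; exists p, v, a.+1; rewrite rcons_cat rcons_cons.
by congr (_ ++ _ :: _); elim: a => //= a ->.
Qed.

Lemma trailing_zeros_le s : trailing_zeros s <= size s.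
Proof.
case: (nseq0_or_last_nonzero s) => [E|[p [v [a ->]]]].
  by rewrite E trailing_zeros_nseq0 size_nseq.
by rewrite trailing_zeros_cat size_cat /= size_nseq; lia.
Qed.

Lemma trailing_zeros_lt s : (trailing_zeros s < size s) = (s != nseq (size s) 0).
Proof.
case: (nseq0_or_last_nonzero s) => [E|[p [v [a E]]]].
  by rewrite {1}E trailing_zeros_nseq0 ltnn -E eqxx.
rewrite E trailing_zeros_cat size_cat /= size_nseq; have -> : a < size p + a.+1 by lia.
apply/esym/eqP => /(congr1 (nth 0 ^~ (size p))).
by rewrite nth_cat ltnn subnn nth_nseq if_same.
Qed.

Lemma lexlt_nseq0_trailing_zeros n s :
  size s = n -> lexlt (nseq n 0) s -> trailing_zeros s < n.
Proof.
move=> <- lts; rewrite trailing_zeros_lt; apply/eqP=> E.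
by rewrite -E in lts; case: (lexlt_irr lts).
Qed.

Lemma seq_split_at (s : seq nat) n : n < size s ->
  exists s1 w s2, s = s1 ++ w :: s2 /\ size s1 = n.
Proof.
move=> ns; exists (take n s), (nth 0 s n), (drop n.+1 s).
by rewrite -drop_nth // cat_take_drop size_take ns.
Qed.

Lemma trailing_zeros_between p v a u : size u = size p + a.+1 ->
  lexlt (p ++ v :: nseq a 0) u -> lexlt u (p ++ v.+1 :: nseq a 0) ->
  trailing_zeros u < a.
Proof.
move=> su; have [u1 [w [u3 [Eu s1]]]] : exists u1 w u3, u = u1 ++ w :: u3 /\ size u1 = size p.
  by apply: seq_split_at; rewrite su; lia.
subst u.
have s3 : size u3 = a by move: su; rewrite size_cat s1 /=; lia.
rewrite !lexlt_cat // => -[lt1|[e1 /= lo]] [lt2|[e2 /= hi]].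
- by case: (lexlt_irr (lexlt_trans lt1 lt2)).
- by rewrite e2 in lt1; case: (lexlt_irr lt1).
- by rewrite e1 in lt2; case: (lexlt_irr lt2).
case: lo hi => [vw|[<- lo]] [wv|[ew hi]]; try lia.
  by case: (not_lexlt_nseq0 s3 hi).
case: (nseq0_or_last_nonzero u3) => [E3|[p3 [v3 [a3 E3]]]].
  by rewrite E3 s3 in lo; case: (lexlt_irr lo).
rewrite E3 -cat_cons catA trailing_zeros_cat.
by move: s3; rewrite E3 size_cat /= size_nseq; lia.
Qed.

Lemma lexlt_refine p v a s : size s = size p + a.+2 ->
  lexlt s (p ++ v.+1 :: nseq a.+1 0) ->
  lexlt s (p ++ v :: (nth 0 s (size p).+1).+1 :: nseq a 0).
Proof.
move=> ss; have [s1 [w [[|w2 s4] [Es s1p]]]] := @seq_split_at s (size p) ltac:(lia); subst s.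
  by move: ss; rewrite size_cat s1p /=; lia.
have s4a : size s4 = a by move: ss; rewrite size_cat s1p /=; lia.
rewrite nth_cat s1p ltnNge leqnSn subSnn /= !lexlt_cat // => -[lt|[-> /= H]]; first by left.
right; split=> //=; case: H => [wv|[ew [//|[_ H]]]].
- by case: (ltngtP w v) => [wv'|vw|->]; [left | lia | right; split=> //; left].
- by case: (not_lexlt_nseq0 s4a H).
Qed.

(** * Limit ranks *)

Fixpoint limit_rank_ge (A : ord) (d : nat) (x : A) : Prop :=
  if d is d'.+1 then
    forall y, olt y x -> exists z, olt y z /\ olt z x /\ limit_rank_ge d' z
  else True.

Lemma limit_rank_geE (A : ord) (D : A -> Prop) (r : A -> nat) :
  (forall x y, D x -> olt y x -> D y) ->
  (forall x, D x -> exists2 y, olt y x & forall z, olt y z -> olt z x -> r z < r x) ->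
  (forall x, D x -> 0 < r x -> forall y, olt y x ->
     exists z, [/\ olt y z, olt z x & r x <= (r z).+1]) ->
  forall d x, D x -> limit_rank_ge d x <-> d <= r x.
Proof.
move=> Ddown isolated approx; elim=> [|d IH] x Dx //=; split.
- move=> lim; have [y yx ry] := isolated x Dx.
  have [z [yz [zx dz]]] := lim y yx.
  by apply: leq_ltn_trans (ry z yz zx); apply/(IH z (Ddown x z Dx zx)).
- move=> dr y yx; have [z [yz zx rz]] := approx x Dx (leq_ltn_trans (leq0n d) dr) y yx.
  exists z; do 2!split=> //; apply/(IH z (Ddown x z Dx zx)).
  by rewrite -ltnS (leq_trans dr rz).
Qed.

Definition gap_count (A : ord) (x : A) (e N : nat) : Prop :=
  exists q, [/\ olt q x, limit_rank_ge e.+1 q,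
    forall z, olt q z -> olt z x -> ~ limit_rank_ge e.+1 z &
    exists l : list A, [/\ List.NoDup l, List.length l = N &
      forall z, olt q z /\ olt z x /\ limit_rank_ge e z <-> List.In z l]].

Lemma gap_count_uniq (A : ord) (x : A) e N N' :
  (forall y z : A, [\/ olt y z, y = z | olt z y]) ->
  gap_count x e N -> gap_count x e N' -> N = N'.
Proof.
move=> total [q [qx rq last_q [l [nl <- inl]]]] [q' [q'x rq' last_q' [l' [nl' <- inl']]]].
case: (total q q') => [lt|Eq|gt]; [by case: (last_q q') | subst q' | by case: (last_q' q)].
by apply/eqP; rewrite eqn_leq; apply/andP; split; apply/leP;
  apply: List.NoDup_incl_length => // z; rewrite -inl -inl'.
Qed.

Section OrderIsomorphism.

Variables (A B : ord) (f : A -> B).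
Hypotheses (f_bij : bijective f) (f_mono : forall x y, olt x y <-> olt (f x) (f y)).

Lemma iso_limit_rank_ge d x : limit_rank_ge d x <-> limit_rank_ge d (f x).
Proof.
have [g fK gK] := f_bij; elim: d x => [|d IH] x //=; split.
- move=> lim y' y'x; rewrite -(gK y') -f_mono in y'x.
  have [z [yz [zx dz]]] := lim _ y'x; exists (f z).
  by rewrite -f_mono -IH -{1}(gK y') -f_mono.
- move=> lim y yx; have [z' [yz [zx dz]]] := lim (f y) (proj1 (f_mono _ _) yx).
  by exists (g z'); rewrite IH gK f_mono gK f_mono gK.
Qed.

Lemma iso_gap_count x e N : gap_count x e N -> gap_count (f x) e N.
Proof.
have [g fK gK] := f_bij.
move=> [q [qx rq last_q [l [nl ln inl]]]]; exists (f q); split.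
- by rewrite -f_mono.
- by rewrite -iso_limit_rank_ge.
- move=> z' qz zx; rewrite -(gK z') in qz zx *.
  by rewrite -iso_limit_rank_ge; apply: last_q; rewrite f_mono.
exists (List.map f l); split; last 1 first.
- move=> z'; rewrite -(gK z') -!f_mono -iso_limit_rank_ge inl; split; first exact: List.in_map.
  by case/List.in_map_iff => a [/(congr1 g)]; rewrite !fK => ->.
- by apply: Injective_map_NoDup => // a b /(congr1 g); rewrite !fK.
- by rewrite List.length_map.
Qed.

End OrderIsomorphism.

(** * The sums of blocks *)

Lemma In_mem (T : eqType) (x : T) (s : seq T) : List.In x s <-> x \in s.
Proof.
elim: s => [|a s IH] //=; rewrite in_cons; split.
- by case=> [->|/IH ->]; rewrite ?eqxx ?orbT.
- by case/orP=> [/eqP ->|/IH]; [left|right].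
Qed.

Lemma uniq_NoDup (T : eqType) (s : seq T) : uniq s -> List.NoDup s.
Proof.
elim: s => [|a s IH] /=; first by constructor.
by case/andP=> ns us; constructor; [rewrite In_mem; apply/negP | apply: IH].
Qed.

Lemma existT_nat_inj {P : nat -> Type} {k} {x y : P k} : existT P k x = existT P k y -> x = y.
Proof. exact: (inj_pair2_eq_dec _ PeanoNat.Nat.eq_dec). Qed.

Lemma length_size (T : Type) (s : seq T) : List.length s = size s.
Proof. by elim: s => //= a s ->. Qed.

Lemma ostar_sum_lt_same (M : nat -> ord) k (a b : M k) :
  @olt (ostar_sum M) (existT _ k a) (existT _ k b) <-> olt a b.
Proof.
split=> [[|[k' [x [y [ea [eb xy]]]]]] /=|ab]; [by rewrite ltnn | | by right; exists k, a, b].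
have /= ? := congr1 (@projT1 _ _) ea; subst k'.
by move: ea eb => /existT_nat_inj -> /existT_nat_inj ->.
Qed.

Lemma ostar_sum_lt_diff (M : nat -> ord) k k' (a : M k) (b : M k') : k <> k' ->
  @olt (ostar_sum M) (existT _ k a) (existT _ k' b) <-> (k' < k)%N.
Proof.
move=> kk'; split=> [[//|[k0 [x [y [ea [eb _]]]]]]|]; last by left.
by move: (congr1 (@projT1 _ _) ea) (congr1 (@projT1 _ _) eb) => /= <- /esym.
Qed.

Section Blocks.

Variables (c : nat -> nat) (d : nat).

Local Notation block k := (kcopies (c k) (omega_pow (d + k.+1))).

Definition Lsum : ord := osum (ostar_sum (fun k => block k)) omega_omega.

Definition pt k (j : 'I_(c k)) (t : (d + k.+1).-tuple nat) : Lsum :=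
  inl (existT (fun k => car (block k)) k (j, t)).

Lemma pt_lt_same k (j j' : 'I_(c k)) t t' :
  olt (pt j t) (pt j' t') <-> (j < j')%N \/ (j = j' /\ lexlt t t').
Proof. exact: (@ostar_sum_lt_same (fun k => block k) k (j, t) (j', t')). Qed.

Lemma pt_lt_copy k (j : 'I_(c k)) t t' : olt (pt j t) (pt j t') <-> lexlt t t'.
Proof. by rewrite pt_lt_same ltnn; split=> [[|[]]|] //; right. Qed.

Lemma pt_lt_diff k k' (j : 'I_(c k)) t (j' : 'I_(c k')) t' :
  k <> k' -> olt (pt j t) (pt j' t') <-> (k' < k)%N.
Proof. exact: (@ostar_sum_lt_diff (fun k => block k) k k' (j, t) (j', t')). Qed.

Lemma pt_lt_index k k' (j : 'I_(c k)) t (j' : 'I_(c k')) t' :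
  olt (pt j t) (pt j' t') -> k' <= k.
Proof.
move=> lt; case: (eqVneq k k') => [-> //|/eqP ne].
by move/(pt_lt_diff _ _ _ _ ne)/ltnW: lt.
Qed.

Lemma pt_inj k (j j' : 'I_(c k)) t t' : pt j t = pt j' t' -> j = j' /\ t = t'.
Proof.
move/(congr1 (fun x : Lsum => if x is inl p then p else existT _ k (j, t))).
by move/existT_nat_inj => -[].
Qed.

Lemma pt_inj_index k k' (j : 'I_(c k)) t (j' : 'I_(c k')) t' : pt j t = pt j' t' -> k = k'.
Proof. by case. Qed.

Lemma Lsum_cases (y : Lsum) : (exists k j t, y = @pt k j t) \/ (exists b, y = inr b).
Proof. by case: y => [[k [j t]]|b]; [left; exists k, j, t | right; exists b]. Qed.

Lemma lt_pt k (j : 'I_(c k)) t y : olt y (pt j t) -> exists k' j' t', y = @pt k' j' t'.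
Proof. by case: (Lsum_cases y) => [|[b ->]]. Qed.

Lemma pt_between k k' (j : 'I_(c k)) t (j' : 'I_(c k')) t' z :
  olt (pt j t) z -> olt z (pt j' t') -> exists k0 j0 t0, z = @pt k0 j0 t0 /\ k' <= k0 <= k.
Proof.
case: (Lsum_cases z) => [[k0 [j0 [t0 ->]]]|[b ->]] // /pt_lt_index ? /pt_lt_index ?.
by exists k0, j0, t0; split=> //; apply/andP.
Qed.

Lemma Lsum_total (x y : Lsum) : [\/ olt x y, x = y | olt y x].
Proof.
case: (Lsum_cases x) (Lsum_cases y) => [[k [j [t ->]]]|[[s sP] ->]]
  [[k' [j' [t' ->]]]|[[s' sP'] ->]];
  try by [constructor 1 | constructor 3].
- case: (ltngtP k k') => [lt|gt|e]; first by constructor 3; apply/pt_lt_diff => //; lia.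
    by constructor 1; apply/pt_lt_diff => //; lia.
  subst k'; case: (ltngtP j j') => [lt|gt|/val_inj <-].
  + by constructor 1; apply/pt_lt_same; left.
  + by constructor 3; apply/pt_lt_same; left.
  case: (lexlt_total (s := t) (t := t')); first by rewrite !size_tuple.
  + by constructor 1; apply/pt_lt_copy.
  + by move/val_inj ->; constructor 2.
  + by constructor 3; apply/pt_lt_copy.
- case: (ltngtP (size s) (size s')) => [lt|gt|e].
    by constructor 1; left.
    by constructor 3; left.
  case: (lexlt_total (s := rev s) (t := rev s')); first by rewrite !size_rev.
  + by constructor 1; right.
  + by move/(congr1 rev); rewrite !revK => ss; constructor 2; congr inr; apply: val_inj.
  + by constructor 3; right.
Qed.

Lemma pt_between_copy k (j : 'I_(c k)) t t' z :
  olt (pt j t) z -> olt z (pt j t') -> exists u, [/\ z = pt j u, lexlt t u & lexlt u t'].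
Proof.
move=> tz zt'; have [k0 [j0 [u [Ez /andP[kk0 k0k]]]]] := pt_between tz zt'; subst z.
have ? : k0 = k by apply/eqP; rewrite eqn_leq k0k. subst k0.
move/pt_lt_same: tz => [jj0|[Ej tu]]; move/pt_lt_same: zt' => [j0j|[Ej' ut']].
- by have := ltn_trans jj0 j0j; rewrite ltnn.
- by move: jj0; rewrite Ej' ltnn.
- by move: j0j; rewrite Ej ltnn.
- by exists u; rewrite Ej'.
Qed.

Local Notation zero k := (nseq_tuple (d + k.+1) 0).

(* A tuple ending in exactly [a] zeros is an [a]-fold left limit inside its copy; the zero tuple
   starts a copy and is the supremum of the previous copy, of type omega^(d+k+1), or, for the
   first copy, of the whole next block, of type c (k+1) omega^(d+k+2). *)
Definition rank (x : Lsum) : nat :=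
  match x with
  | inl (existT k (j, t)) => trailing_zeros t + ((j == 0 :> nat) && (val t == nseq (d + k.+1) 0))
  | inr _ => 0
  end.

Lemma rank_pt_lt k (j : 'I_(c k)) (t : (d + k.+1).-tuple nat) :
  trailing_zeros t < d + k.+1 -> rank (pt j t) = trailing_zeros t.
Proof.
rewrite -[X in _ < X](size_tuple t) trailing_zeros_lt size_tuple /= => /negbTE ->.
by rewrite andbF addn0.
Qed.

Lemma rank_pt_zero k (j : 'I_(c k)) : rank (pt j (zero k)) = d + k.+1 + (j == 0 :> nat).
Proof. by rewrite /= trailing_zeros_nseq0 eqxx andbT. Qed.

Lemma rank_pt_le k (j : 'I_(c k)) (t : (d + k.+1).-tuple nat) : rank (pt j t) <= (d + k.+1).+1.
Proof.
have := trailing_zeros_le t; rewrite size_tuple => tz_le.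
by rewrite /= -[(d + k.+1).+1]addn1 leq_add ?leq_b1.
Qed.

Lemma rank_pt_pos k (j : 'I_(c k)) (t : (d + k.+1).-tuple nat) :
  lexlt (nseq (d + k.+1) 0) t -> rank (pt j t) < d + k.+1.
Proof.
by move=> /(lexlt_nseq0_trailing_zeros (size_tuple t)) ztt; rewrite rank_pt_lt.
Qed.

Lemma rank_pt_cat k (j : 'I_(c k)) (t : (d + k.+1).-tuple nat) p v a :
  val t = p ++ v.+1 :: nseq a 0 -> rank (pt j t) = a.
Proof.
move=> Et; have st := size_tuple t; rewrite Et size_cat /= size_nseq in st.
by rewrite rank_pt_lt Et trailing_zeros_cat //; lia.
Qed.

Lemma rank_pt_head k (j : 'I_(c k)) N (t : (d + k.+1).-tuple nat) :
  val t = N.+1 :: nseq (d + k) 0 -> rank (pt j t) = d + k.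
Proof. exact: (@rank_pt_cat k j t [::] N (d + k)). Qed.

Lemma exists_tuple n (s : seq nat) : size s = n -> exists t : n.-tuple nat, val t = s.
Proof. by move/eqP=> sn; exists (Tuple sn). Qed.

Definition copy_sup k (j : 'I_(c k)) (x : Lsum) :=
  (forall u, olt (pt j u) x) /\
  (forall y, olt y x -> (exists u, y = pt j u) \/ (forall u, olt y (pt j u))).

Lemma copy_sup_isolated k (j : 'I_(c k)) x z :
  copy_sup j x -> olt (pt j (zero k)) z -> olt z x -> rank z < d + k.+1.
Proof.
move=> [_ near_x] jz zx; case: (near_x z zx) => [[u Ez]|zj].
  by subst z; apply: rank_pt_pos; move/pt_lt_copy: jz.
by have [u [_ _ /(not_lexlt_nseq0 (size_tuple u))]] := pt_between_copy jz (zj (zero k)).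
Qed.

Lemma copy_sup_approx k (j : 'I_(c k)) x y :
  copy_sup j x -> olt y x -> exists z, [/\ olt y z, olt z x & rank z = d + k].
Proof.
move=> [below_x near_x] yx.
have head N : exists h : (d + k.+1).-tuple nat, val h = N.+1 :: nseq (d + k) 0.
  by apply: exists_tuple; rewrite /= size_nseq addnS.
case: (near_x y yx) => [[u ->]|yj].
- have [h Eh] := head (nth 0 u 0); exists (pt j h); split; last exact: rank_pt_head Eh.
    apply/pt_lt_copy; rewrite Eh; have := size_tuple u.
    by case: (tval u) => [|w u'] /=; [rewrite addnS | left].
  exact: below_x.
- have [h Eh] := head 0; exists (pt j h); split; [exact: yj | exact: below_x |].
  exact: rank_pt_head Eh.
Qed.

Hypothesis c_gt0 : forall k, 0 < c k.

Lemma pred_c_ltn k : (c k).-1 < c k.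
Proof. by rewrite ltn_predL. Qed.

Definition first_copy k : 'I_(c k) := Ordinal (c_gt0 k).
Definition last_copy k : 'I_(c k) := Ordinal (pred_c_ltn k).

Lemma copy_sup_next_copy k (j j' : 'I_(c k)) :
  j' = j.+1 :> nat -> copy_sup j (pt j' (zero k)).
Proof.
move=> Ej'; split=> [u|y yx]; first by apply/pt_lt_same; left; rewrite Ej'.
have [ky [jy [u Ey]]] := lt_pt yx; subst y.
case: (eqVneq ky k) => [?|/eqP ne]; last first.
  by right=> u'; apply/pt_lt_diff => //; apply: (pt_lt_diff _ _ _ _ ne).1 yx.
subst ky; move/pt_lt_same: yx => [|[_ /(not_lexlt_nseq0 (size_tuple u))]] //.
rewrite Ej' ltnS leq_eqVlt => /orP[/eqP/val_inj->|jyj]; first by left; exists u.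
by right=> u'; apply/pt_lt_same; left.
Qed.

Lemma copy_sup_next_block k : copy_sup (last_copy k.+1) (pt (first_copy k) (zero k)).
Proof.
split=> [u|y yx]; first by apply/pt_lt_diff => //; lia.
have [ky [jy [u Ey]]] := lt_pt yx; subst y.
case: (eqVneq ky k) => [?|/eqP ne].
  by subst ky; move/pt_lt_same: yx => [//|[_ /(not_lexlt_nseq0 (size_tuple u))]].
have kky : k < ky := (pt_lt_diff _ _ _ _ ne).1 yx.
case: (eqVneq ky k.+1) => [?|/eqP ne']; last first.
  by right=> u'; apply/pt_lt_diff => //; lia.
subst ky; have : jy <= (c k.+1).-1 by rewrite -ltnS prednK.
rewrite leq_eqVlt => /orP[/eqP ejy|jyl].
  by left; exists u; rewrite (_ : jy = last_copy k.+1) //; apply: val_inj.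
by right=> u'; apply/pt_lt_same; left.
Qed.

Lemma pt_zero_copy_sup k (j : 'I_(c k)) :
  exists k' (j' : 'I_(c k')), copy_sup j' (pt j (zero k)) /\ rank (pt j (zero k)) = d + k'.+1.
Proof.
rewrite rank_pt_zero; case: j => -[|j0] lj.
  exists k.+1, (last_copy k.+1); split; last by rewrite addn1 -addnS.
  have -> : Ordinal lj = first_copy k by apply: val_inj.
  exact: copy_sup_next_block.
have lj0 : j0 < c k by apply: ltnW.
by exists k, (Ordinal lj0); rewrite addn0; split=> //; apply: copy_sup_next_copy.
Qed.

Lemma lt_pt_cases k (j : 'I_(c k)) t y : olt y (pt j t) ->
  (exists2 s, y = pt j s & lexlt s t) \/ (forall u, olt y (pt j u)).
Proof.
move=> yt; have [ky [jy [s Ey]]] := lt_pt yt; subst y.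
case: (eqVneq ky k) => [?|/eqP ne]; last first.
  by right=> u; apply/pt_lt_diff => //; apply: (pt_lt_diff _ _ _ _ ne).1 yt.
subst ky; case/pt_lt_same: yt => [jyj|[-> st]]; last by left; exists s.
by right=> u; apply/pt_lt_same; left.
Qed.

Lemma inner_pt_isolated k (j : 'I_(c k)) t p v a : val t = p ++ v.+1 :: nseq a 0 ->
  exists2 y, olt y (pt j t) & forall z, olt y z -> olt z (pt j t) -> rank z < a.
Proof.
move=> Et; have st := size_tuple t; rewrite Et size_cat /= size_nseq in st.
have [y Ey] : exists y : (d + k.+1).-tuple nat, val y = p ++ v :: nseq a 0.
  by apply: exists_tuple; rewrite size_cat /= size_nseq.
exists (pt j y) => [|z yz zt].
  by apply/pt_lt_copy; rewrite Ey Et lexlt_cat //; right; split=> //; left.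
have [u [-> yu ut]] := pt_between_copy yz zt.
have tzu : trailing_zeros u < a.
  by apply: (trailing_zeros_between (p := p) (v := v)); rewrite -?Ey -?Et // size_tuple.
by rewrite rank_pt_lt //; lia.
Qed.

Lemma inner_pt_approx k (j : 'I_(c k)) t p v a y : val t = p ++ v.+1 :: nseq a.+1 0 ->
  olt y (pt j t) -> exists z, [/\ olt y z, olt z (pt j t) & rank z = a].
Proof.
move=> Et yt; have st := size_tuple t; rewrite Et size_cat /= size_nseq in st.
have near N : exists h : (d + k.+1).-tuple nat, val h = p ++ v :: N.+1 :: nseq a 0.
  by apply: exists_tuple; rewrite size_cat /= size_nseq.
have near_rank N (h : (d + k.+1).-tuple nat) :
    val h = p ++ v :: N.+1 :: nseq a 0 -> rank (pt j h) = a.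
  by move=> Eh; apply: (@rank_pt_cat k j h (rcons p v) N); rewrite Eh -cats1 -catA.
have near_lt N h : val h = p ++ v :: N.+1 :: nseq a 0 -> olt (pt j h) (pt j t).
  by move=> Eh; apply/pt_lt_copy; rewrite Eh Et lexlt_cat //; right; split=> //; left.
case: (lt_pt_cases yt) => [[s -> st']|yj].
- have [h Eh] := near (nth 0 s (size p).+1); exists (pt j h).
  split; [apply/pt_lt_copy; rewrite Eh | exact: near_lt Eh | exact: near_rank Eh].
  by apply: lexlt_refine; rewrite -?Et // size_tuple.
- have [h Eh] := near 0; exists (pt j h).
  by split; [exact: yj | exact: near_lt Eh | exact: near_rank Eh].
Qed.

Lemma pt_cases k (t : (d + k.+1).-tuple nat) :
  t = zero k \/ exists p v a, val t = p ++ v.+1 :: nseq a 0.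
Proof.
case: (nseq0_or_last_nonzero t) => [Et|]; last by right.
by left; apply: val_inj; rewrite /= {1}Et size_tuple.
Qed.

Lemma pt_isolated k (j : 'I_(c k)) t : exists2 y, olt y (pt j t) &
  forall z, olt y z -> olt z (pt j t) -> rank z < rank (pt j t).
Proof.
case: (pt_cases t) => [->|[p [v [a Et]]]]; last first.
  by rewrite (rank_pt_cat _ Et); apply: inner_pt_isolated Et.
have [k' [j' [sup_j' ->]]] := pt_zero_copy_sup j.
by exists (pt j' (zero k')) => [|z]; [apply: sup_j'.1 | apply: copy_sup_isolated].
Qed.

Lemma pt_approx k (j : 'I_(c k)) t : 0 < rank (pt j t) -> forall y, olt y (pt j t) ->
  exists z, [/\ olt y z, olt z (pt j t) & rank (pt j t) <= (rank z).+1].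
Proof.
case: (pt_cases t) => [->|[p [v [[|a] Et]]]].
- move=> _ y yx; have [k' [j' [sup_j' ->]]] := pt_zero_copy_sup j.
  have [z [yz zx rz]] := copy_sup_approx sup_j' yx.
  by exists z; rewrite rz -addnS.
- by rewrite (rank_pt_cat _ Et).
- move=> _ y yx; have [z [yz zx rz]] := inner_pt_approx Et yx.
  by exists z; rewrite (rank_pt_cat _ Et) rz.
Qed.

Lemma limit_rank_ge_pt n k (j : 'I_(c k)) t : limit_rank_ge n (pt j t) <-> n <= rank (pt j t).
Proof.
apply: (@limit_rank_geE Lsum (fun x => exists k j t, x = @pt k j t)); last by exists k, j, t.
- by move=> x y [k' [j' [t' ->]]] /lt_pt.
- by move=> x [k' [j' [t' ->]]]; apply: pt_isolated.
- by move=> x [k' [j' [t' ->]]]; apply: pt_approx.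
Qed.

Lemma rank_pt_ge_zero k (j : 'I_(c k)) t : d + k.+1 <= rank (pt j t) -> t = zero k.
Proof.
case: (pt_cases t) => [//|[p [v [a Et]]]]; rewrite (rank_pt_cat _ Et) => ge.
have := size_tuple t; rewrite Et size_cat /= size_nseq; lia.
Qed.

(* The points of limit rank [d + k.+2] after the start of block [k.+1]: the starts of its other
   copies and the start of block [k]. *)
Definition gap_point k (j : 'I_(c k.+1)) : Lsum :=
  if j == 0 :> nat then pt (first_copy k) (zero k) else pt j (zero k.+1).

Lemma rank_gap_point k (j : 'I_(c k.+1)) : rank (gap_point j) = d + k.+2.
Proof.
rewrite /gap_point; case: ifP => [_|/negbT/negbTE j0]; rewrite rank_pt_zero /=.
  by rewrite addn1 -addnS.
by rewrite j0 addn0.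
Qed.

Lemma gap_point_inj k : injective (@gap_point k).
Proof.
move=> j j'; rewrite /gap_point.
case: ifP => [/eqP j0|_]; case: ifP => [/eqP j'0|_] => E.
- by apply: val_inj; rewrite /= j0 j'0.
- by move/pt_inj_index: E; lia.
- by move/pt_inj_index: E; lia.
- by case/pt_inj: E.
Qed.

Lemma gap_point_after k (j : 'I_(c k.+1)) : olt (pt (first_copy k.+1) (zero k.+1)) (gap_point j).
Proof.
rewrite /gap_point; case: ifP => [_|/negbT j0]; first by apply/pt_lt_diff => //; lia.
by apply/pt_lt_same; left; rewrite lt0n.
Qed.

Lemma ge_rank_after_block_start k k' (j' : 'I_(c k')) u :
  olt (pt (first_copy k.+1) (zero k.+1)) (pt j' u) -> d + k.+2 <= rank (pt j' u) ->
  exists j, pt j' u = @gap_point k j.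
Proof.
move=> qz; have kk' := pt_lt_index qz; case: (eqVneq k' k.+1) => [?|/eqP ne] re.
  subst k'; have ? := rank_pt_ge_zero re; subst u.
  exists j'; rewrite /gap_point; case: ifP => // /eqP j'0.
  by move/pt_lt_same: qz => [|[_ /(not_lexlt_nseq0 (size_tuple _))]] //=; rewrite j'0.
have ? : k' = k by have := rank_pt_le j' u; lia. subst k'.
have ? : u = zero k by apply: (rank_pt_ge_zero (j := j')); lia. subst u.
move: re; rewrite rank_pt_zero; case: eqP => [j'0|_]; last by rewrite addn0; lia.
exists (first_copy k.+1); rewrite /gap_point /= (_ : j' = first_copy k) //; exact: val_inj.
Qed.

Definition omega_start : Lsum := inr (exist (fun s : seq nat => last 1 s != 0) [::] isT).

Definition above_blocks K (x : Lsum) :=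
  (forall k (j : 'I_(c k)) t, K < k -> olt (pt j t) x) /\
  (forall z, olt z x -> exists k j t, z = @pt k j t).

Lemma gap_count_above_blocks K x k : above_blocks K x -> K < k -> gap_count x (d + k.+2) (c k.+1).
Proof.
move=> [blocks_below only_blocks] Kk; pose q := pt (first_copy k.+1) (zero k.+1).
have gap_x j : olt (@gap_point k j) x.
  by rewrite /gap_point; case: ifP => _; apply: blocks_below => //; apply: ltnW.
exists q; split.
- by apply: blocks_below; apply: ltnW.
- by rewrite limit_rank_ge_pt rank_pt_zero /= addn1 -addnS.
- move=> z qz zx; have [kz [jz [u Ez]]] := only_blocks z zx; subst z.
  rewrite limit_rank_ge_pt => rz; have [j Ej] := ge_rank_after_block_start qz (ltnW rz).
  by rewrite Ej rank_gap_point ltnn in rz.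
exists (List.map (@gap_point k) (enum 'I_(c k.+1))); split.
- exact: Injective_map_NoDup (@gap_point_inj k) (uniq_NoDup (enum_uniq _)).
- by rewrite List.length_map length_size size_enum_ord.
move=> z; rewrite List.in_map_iff; split.
- move=> [qz [zx rz]]; have [kz [jz [u Ez]]] := only_blocks z zx; subst z.
  move: rz; rewrite limit_rank_ge_pt => /(ge_rank_after_block_start qz) [j ->].
  by exists j; rewrite In_mem mem_enum.
- move=> [j [<- _]]; split; [exact: gap_point_after | split; first exact: gap_x].
  by have := rank_gap_point j; rewrite /gap_point; case: ifP => _ rj; rewrite limit_rank_ge_pt rj.
Qed.

Lemma not_lt_omega_start b : ~ olt (inr b : Lsum) omega_start.
Proof. by case: b => [[|a s] sP] /= [//|[]] // _; rewrite /rev /=; case: (catrev s [:: a]). Qed.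

Lemma le_omega_start_above_blocks x :
  x = omega_start \/ olt x omega_start -> exists K, above_blocks K x.
Proof.
have below_start z : olt z omega_start -> exists k j t, z = @pt k j t.
  by case: (Lsum_cases z) => [//|[b ->] /not_lt_omega_start].
case=> [->|]; first by exists 0.
case: (Lsum_cases x) => [[K [j [t ->]]]|[b -> /not_lt_omega_start //]] _.
exists K; split=> [k j' t' Kk|z /lt_pt //]; apply/pt_lt_diff => //; lia.
Qed.

End Blocks.

(** * Non-isomorphism and scatteredness *)

Lemma Lsum_iso_eventually_eq c d c' d' : (forall k, 0 < c k) -> (forall k, 0 < c' k) ->
  isomorphic (Lsum c d) (Lsum c' d') ->
  exists E0, forall e, E0 <= e -> c (e + d').+1 = c' (e + d).+1.
Proof.
move=> c_gt0 c'_gt0 [f [f_bij f_mono]]; have [g fK gK] := f_bij.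
have [x0 [x0_le f_x0_le]] : exists x0,
    (x0 = omega_start c d \/ olt x0 (omega_start c d)) /\
    (f x0 = omega_start c' d' \/ olt (f x0) (omega_start c' d')).
  case: (Lsum_total (g (omega_start c' d')) (omega_start c d)) => [lt|<-|gt].
  - by exists (g (omega_start c' d')); rewrite gK; split; [right | left].
  - by exists (g (omega_start c' d')); rewrite gK; split; left.
  - by exists (omega_start c d); split; [left | right; rewrite -[X in olt _ X]gK -f_mono].
have [K above_x0] := le_omega_start_above_blocks x0_le.
have [K' above_f_x0] := le_omega_start_above_blocks f_x0_le.
exists (K + K').+1 => e le_e.
have [Kk K'k] : K < e + d' /\ K' < e + d by lia.
have gap := gap_count_above_blocks c_gt0 above_x0 Kk.
have gap' := gap_count_above_blocks c'_gt0 above_f_x0 K'k.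
rewrite (_ : d' + (e + d).+2 = d + (e + d').+2) in gap'; last by lia.
exact: gap_count_uniq (@Lsum_total c' d') (iso_gap_count f_bij f_mono gap) gap'.
Qed.

Lemma scattered_of_Acc_above (A : ord) :
  (forall x y : A, [\/ olt x y, x = y | olt y x]) ->
  (forall x y : A, Acc (fun a b => olt a b /\ olt x a) y) -> scattered A.
Proof.
move=> total wf_above [D [infD denseD]].
have [x [y [Dx Dy xy]]] : exists x y, [/\ D x, D y & olt x y].
  apply: NNPP => no_pair; apply: infD.
  case: (classic (exists a, D a)) => [[a Da]|noD].
    exists [:: a] => z Dz; left; apply: NNPP => za; apply: no_pair.
    by case: (total a z) => [az|//|za']; [exists a, z | exists z, a].
  by exists [::] => z Dz; apply: noD; exists z.
elim: (wf_above x y) Dy xy => {}y _ IH Dy xy.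
by have [z [Dz [xz zy]]] := denseD x y Dx Dy xy; apply: (IH z).
Qed.

Lemma omega_pow_Acc n (t : omega_pow n) : Acc (@olt (omega_pow n)) t.
Proof.
have := Acc_lexlt (size_tuple t); move Es : (val t) => s acc_s.
elim: acc_s t Es => {}s _ IH t Es; constructor=> t' tt'.
by apply: (IH (val t')) => //; rewrite -Es !size_tuple.
Qed.

Lemma kcopies_Acc k (Z : ord) :
  (forall z : Z, Acc (@olt Z) z) -> forall a : kcopies k Z, Acc (@olt (kcopies k Z)) a.
Proof.
move=> wfZ [j z]; move Ej : (nat_of_ord j) => n.
elim/ltn_ind: n j z Ej => n IHn j z Ej; elim: (wfZ z) => {}z _ IHz.
constructor=> -[j' z'] [lt|[/= e zz']]; first by apply: (IHn j') => //; rewrite -Ej.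
by rewrite e; apply: IHz.
Qed.

Lemma omega_omega_Acc (b : omega_omega) : Acc (@olt omega_omega) b.
Proof.
move Eb : (size (val b)) => n; elim/ltn_ind: n b Eb => n IHn b Eb.
have := Acc_lexlt (size_rev (val b)); move Er : (rev (val b)) => u acc_u.
elim: acc_u b Eb Er => {}u _ IH b Eb Er; constructor=> b' [lt|[e lt]].
  by apply: (IHn (size (val b'))); rewrite -?Eb.
by apply: (IH (rev (val b'))); rewrite -?Er ?size_rev ?e.
Qed.

Section BlocksWellFounded.
Variables (c : nat -> nat) (d : nat).

Lemma Lsum_Acc_above (x y : Lsum c d) : Acc (fun a b => olt a b /\ olt x a) y.
Proof.
have Acc_pt k (j : 'I_(c k)) t : Acc (fun a b => olt a b /\ olt x a) (pt j t).
  case: (Lsum_cases x) => [[K [jx [tx Ex]]]|[b Ex]]; subst x; last first.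
    by constructor=> z [/lt_pt [kz [jz [u ->]]]].
  case: (leqP k K) => [kK|Kk]; last first.
    constructor=> z [/[dup] zt /lt_pt [kz [jz [u Ez]]] xz]; subst z.
    by have := pt_lt_index xz; have := pt_lt_index zt; lia.
  move En : (K - k) => n; elim/ltn_ind: n k kK En j t => n IHn k kK En j t.
  have := @kcopies_Acc (c k) _ (@omega_pow_Acc (d + k.+1)) (j, t).
  move Ep : (j, t) => p acc_p.
  elim: acc_p j t Ep => {}p _ IHp j t Ep; constructor=> z [/[dup] zt /lt_pt [kz [jz [u Ez]]] xz].
  subst z; case: (eqVneq kz k) => [?|/eqP ne].
    by subst kz p; apply: (IHp (jz, u)) => //; apply/pt_lt_same.
  have kkz : k < kz := (pt_lt_diff _ _ _ _ ne).1 zt.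
  have kzK := pt_lt_index xz.
  by apply: (IHn (K - kz)) => //; lia.
case: (Lsum_cases y) => [[k [j [t ->]]]//|[b ->]].
elim: (omega_omega_Acc b) => {}b _ IH; constructor=> z [zb _].
by case: (Lsum_cases z) => [[k [j [t ->]]]//|[b' Ez]]; subst z; apply: IH.
Qed.

End BlocksWellFounded.

Lemma Lsum_scattered c d : scattered (Lsum c d).
Proof. exact: scattered_of_Acc_above (@Lsum_total c d) (@Lsum_Acc_above c d). Qed.

Definition block_params (i : int) : nat * nat :=
  match i with Posz n => (0, n) | Negz n => (n.+1, 0) end.

Lemma L_Lsum i : L i = Lsum (fun k => (block_params i).1 + k.+1) (block_params i).2.
Proof. by case: i. Qed.

Lemma block_params_inj i j :
  (block_params i).1 + (block_params j).2 = (block_params j).1 + (block_params i).2 -> i = j.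
Proof. by case: i j => n [] m /=; lia. Qed.

Theorem mainTheorem3 :
  (forall i j : int, i <> j -> ~ isomorphic (L i) (L j)) /\
  (forall i : int, scattered (L i)).
Proof.
split=> [i j ij|i]; last by rewrite L_Lsum; apply: Lsum_scattered.
have c_gt0 i' k : 0 < (block_params i').1 + k.+1 by rewrite addnS.
rewrite !L_Lsum => /(Lsum_iso_eventually_eq (c_gt0 i) (c_gt0 j)) [E0 eventually_eq].
by apply/ij/block_params_inj; have := eventually_eq E0 (leqnn E0); lia.
Qed.
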